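(* Let $f_1,f_2$ be strongly hyperbolic functions, $a_1,a_2>0$, $b_1,b_2,c_1,c_2\in\mathbb{R}$, and let $D_1=\overline{f_{a_1,b_1,c_1}}$, $D_2=\overline{f_{a_2,b_2,c_2}}$ be distinct with $D_1\cap D_2=\{p\}$. (1) If $p=(b,\infty)$ with $b\in\mathbb{R}$, then $a_1=a_2$, $b_1=b_2=-b$ and $c_1\neq c_2$. (2) If $p=(\infty,c)$ with $c\in\mathbb{R}$, then $a_1=a_2$, $b_1\neq b_2$ and $c_1=c_2=c$. (3) If $p=(x_p,y_p)\in\mathbb{R}^2$, then $f'_{a_1,b_1,c_1}(x_p)=f'_{a_2,b_2,c_2}(x_p)$.
   Context: Identify $\mathbb{S}^1$ with $\mathbb{R}\cup\{\infty\}$, $\mathcal{P}=\mathbb{S}^1\times\mathbb{S}^1$, $\mathbb{R}^+=(0,\infty)$. A function $f:\mathbb{R}^+\to\mathbb{R}^+$ is strongly hyperbolic if: (1) $\lim_{x\to0+}f(x)=+\infty$, $\lim_{x\to+\infty}f(x)=0$; (2) $f$ strictly convex; (3) $\lim_{x\to+\infty}f(x+b)/f(x)=1$ for each $b\in\mathbb{R}$; (4) $f$ differentiable; (5) $\ln|f'|$ strictly convex. For $a>0$, $b,c\in\mathbb{R}$: $f_{a,b,c}:\mathbb{R}\setminus\{-b\}\to\mathbb{R}$, $f_{a,b,c}(x)=af_1(x+b)+c$ for $x>-b$, $f_{a,b,c}(x)=-af_2(-x-b)+c$ for $x<-b$; $\overline{f_{a,b,c}}=\{(x,f_{a,b,c}(x)):x\ne-b\}\cup\{(-b,\infty),(\infty,c)\}\subset\mathcal{P}$.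 *)

From Stdlib Require Import Reals.
From Coquelicot Require Import Coquelicot.
Open Scope R_scope.

(* S^1 = R ∪ {∞}: [Some x] is the real x, [None] is ∞. *)
Definition S1 := option R.
Definition P := (S1 * S1)%type.

Definition strictly_convex_pos (g : R -> R) : Prop :=
  forall x y t, 0 < x -> 0 < y -> x <> y -> 0 < t < 1 ->
    g (t * x + (1 - t) * y) < t * g x + (1 - t) * g y.

(* f : R^+ -> R^+ is represented by f : R -> R, only its values on (0,∞) matter. *)
Definition strongly_hyperbolic (f : R -> R) : Prop :=
  (forall x, 0 < x -> 0 < f x) /\
  filterlim f (at_right 0) (Rbar_locally p_infty) /\
  is_lim f p_infty 0 /\
  strictly_convex_pos f /\
  (forall b : R, is_lim (fun x => f (x + b) / f x) p_infty 1) /\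
  (forall x, 0 < x -> ex_derive f x) /\
  strictly_convex_pos (fun x => ln (Rabs (Derive f x))).

(* f_{a,b,c}; the value at x = -b is irrelevant (not in the domain). *)
Definition fabc (f1 f2 : R -> R) (a b c : R) (x : R) : R :=
  if Rlt_dec (- b) x then a * f1 (x + b) + c else - a * f2 (- x - b) + c.

Definition fabc_bar (f1 f2 : R -> R) (a b c : R) (q : P) : Prop :=
  (exists x, x <> - b /\ q = (Some x, Some (fabc f1 f2 a b c x))) \/
  q = (Some (- b), None) \/
  q = (None, Some c).

(** Write F_i for f_{a_i,b_i,c_i} and h = F_1 - F_2. Each F_i tends to c_i at both
    infinities, to -oo left of its pole -b_i and to +oo right of it, and the finite common
    points of the closed graphs are the zeros of h off the poles.
    (1) With a common pole, F_1 = F_2 on one branch reduces to f_j t = v for an explicit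
    v > 0, solvable since f_j maps (0, oo) onto (0, oo); so a_1 <> a_2 would give a second
    common point.
    (2) With a common asymptote and a_1 <> a_2, the condition f (x + b) / f x -> 1 gives h
    the sign of a_2 - a_1 at -oo and of a_1 - a_2 at +oo, opposite to its sign next to the
    nearer pole, so h has a zero on an outer branch.
    (3) For a finite common point, say -b_1 < -b_2: if c_1 > c_2, h changes sign on both
    outer intervals and has two zeros; so c_1 < c_2, h has one sign near both ends of each
    of the three intervals cut out by the poles, and by the intermediate value theorem its
    unique zero is a local extremum, where h' vanishes. *)

From Stdlib Require Import Reals Lra.
From Coquelicot Require Import Coquelicot.
Open Scope R_scope.

Definition Rbar_at_right (a : Rbar) : (R -> Prop) -> Prop :=
  within (fun x : R => Rbar_lt a x) (Rbar_locally a).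

Definition Rbar_at_left (b : Rbar) : (R -> Prop) -> Prop :=
  within (fun x : R => Rbar_lt x b) (Rbar_locally b).

Global Instance Rbar_at_right_filter (a : Rbar) : Filter (Rbar_at_right a).
Proof. unfold Rbar_at_right. apply within_filter, Rbar_locally_filter. Qed.

Global Instance Rbar_at_left_filter (b : Rbar) : Filter (Rbar_at_left b).
Proof. unfold Rbar_at_left. apply within_filter, Rbar_locally_filter. Qed.

Lemma Rbar_at_right_ex (a : Rbar) (y : R) (Q : R -> Prop) :
  Rbar_lt a y -> Rbar_at_right a Q -> exists z : R, Rbar_lt a z /\ z < y /\ Q z.
Proof.
destruct a as [a| |]; simpl; intros Hay HQ; [|contradiction|].
- assert (Hlt : at_right a (fun z => z < y)) by exact (filter_le_within _ _ (open_lt y a Hay)).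
  assert (Hgt : at_right a (fun z => a < z))
    by (unfold at_right, within; apply filter_forall; auto).
  destruct (filter_ex _ (filter_and _ _ Hgt (filter_and _ _ Hlt HQ))) as [z Hz].
  exists z; exact Hz.
- destruct HQ as [M HM].
  pose proof (Rmin_l M y); pose proof (Rmin_r M y).
  exists (Rmin M y - 1); repeat split; [lra | apply HM; [lra | exact I]].
Qed.

Lemma Rbar_at_left_ex (b : Rbar) (y : R) (Q : R -> Prop) :
  Rbar_lt y b -> Rbar_at_left b Q -> exists z : R, y < z /\ Rbar_lt z b /\ Q z.
Proof.
destruct b as [b| |]; simpl; intros Hyb HQ; [| |contradiction].
- assert (Hgt : at_left b (fun z => y < z)) by exact (filter_le_within _ _ (open_gt y b Hyb)).
  assert (Hlt : at_left b (fun z => z < b))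
    by (unfold at_left, within; apply filter_forall; auto).
  destruct (filter_ex _ (filter_and _ _ Hgt (filter_and _ _ Hlt HQ))) as [z Hz].
  exists z; exact Hz.
- destruct HQ as [M HM].
  pose proof (Rmax_l M y); pose proof (Rmax_r M y).
  exists (Rmax M y + 1); repeat split; [lra | apply HM; [lra | exact I]].
Qed.

Lemma IVT_strict (h : R -> R) (x y : R) : x < y ->
  (forall z, x <= z <= y -> continuous h z) ->
  h x < 0 < h y \/ h y < 0 < h x -> exists z, x < z < y /\ h z = 0.
Proof.
intros Hxy Hc Hsign.
assert (Hinc : forall g, (forall z, x <= z <= y -> continuous g z) -> g x < 0 < g y ->
          exists z, x < z < y /\ g z = 0).
{ intros g Hg [Hgx Hgy].
  destruct (Ranalysis5.IVT_interv g x y) as [z [[Hxz Hzy] Hgz]]; auto.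
  { intros z Hz; now apply continuity_pt_filterlim, Hg. }
  destruct Hxz as [Hxz | <-]; [| lra].
  destruct Hzy as [Hzy | ->]; [| lra].
  now exists z. }
destruct Hsign as [Hsign | Hsign]; [now apply Hinc |].
destruct (Hinc (fun z => - h z)) as [z [Hz Hhz]]; [| lra |].
- intros z Hz. apply (continuous_opp h), Hc, Hz.
- exists z; split; [exact Hz | lra].
Qed.

Lemma Rbar_lt_between (a b : Rbar) (z1 z2 : R) : Rbar_lt a z1 -> Rbar_lt z2 b ->
  forall x : R, z1 <= x <= z2 -> Rbar_lt a x /\ Rbar_lt x b.
Proof.
intros Ha Hb x Hx; split.
- now apply (Rbar_lt_le_trans a z1 x).
- now apply (Rbar_le_lt_trans x z2 b).
Qed.

Lemma Derive_local_max (h : R -> R) (x : R) :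
  ex_derive h x -> locally x (fun y => h y <= h x) -> Derive h x = 0.
Proof.
intros Hd [e He].
rewrite <- (Derive_Reals h x (ex_derive_Reals_0 h x Hd)).
apply (deriv_maximum h (x - e) (x + e)); [destruct e; simpl; lra ..|].
intros y Hy1 Hy2; apply He.
change (Rabs (y - x) < e); apply Rabs_def1; lra.
Qed.

Section UniqueRoot.
Variables (h : R -> R) (a b : Rbar) (xp : R).
Hypotheses (Hcont : forall x : R, Rbar_lt a x -> Rbar_lt x b -> continuous h x)
  (Hleft : Rbar_at_right a (fun x => h x < 0)) (Hright : Rbar_at_left b (fun x => h x < 0))
  (Huniq : forall x : R, Rbar_lt a x -> Rbar_lt x b -> h x = 0 -> x = xp).

Lemma nonpos_of_unique_root (y : R) : Rbar_lt a y -> Rbar_lt y b -> h y <= 0.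
Proof.
intros Hay Hyb. apply Rnot_lt_le; intros Hhy.
destruct (Rbar_at_right_ex a y _ Hay Hleft) as [z1 [Haz1 [Hz1y Hhz1]]].
destruct (Rbar_at_left_ex b y _ Hyb Hright) as [z2 [Hyz2 [Hz2b Hhz2]]].
pose proof (Rbar_lt_between a b z1 z2 Haz1 Hz2b) as Hin.
destruct (IVT_strict h z1 y) as [r1 [Hr1 Hhr1]]; auto.
{ intros x Hx; apply Hcont; apply Hin; lra. }
destruct (IVT_strict h y z2) as [r2 [Hr2 Hhr2]]; auto.
{ intros x Hx; apply Hcont; apply Hin; lra. }
assert (r1 = xp) by (apply Huniq; try apply Hin; auto; lra).
assert (r2 = xp) by (apply Huniq; try apply Hin; auto; lra).
lra.
Qed.

Lemma Derive_eq_0_at_unique_root :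
  Rbar_lt a xp -> Rbar_lt xp b -> h xp = 0 -> ex_derive h xp -> Derive h xp = 0.
Proof.
intros Haxp Hxpb Hxp Hd.
apply Derive_local_max; [exact Hd|].
apply (locally_interval _ xp a b Haxp Hxpb).
intros y Hay Hyb; rewrite Hxp; now apply nonpos_of_unique_root.
Qed.

End UniqueRoot.

Lemma Derive_eq_0_at_unique_root_pos (h : R -> R) (a b : Rbar) (xp : R) :
  (forall x : R, Rbar_lt a x -> Rbar_lt x b -> continuous h x) ->
  Rbar_at_right a (fun x => 0 < h x) -> Rbar_at_left b (fun x => 0 < h x) ->
  (forall x : R, Rbar_lt a x -> Rbar_lt x b -> h x = 0 -> x = xp) ->
  Rbar_lt a xp -> Rbar_lt xp b -> h xp = 0 -> ex_derive h xp -> Derive h xp = 0.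
Proof.
intros Hcont Hleft Hright Huniq Haxp Hxpb Hxp Hd.
assert (Hopp : Derive (fun x => - h x) xp = 0).
{ apply (Derive_eq_0_at_unique_root _ a b); auto.
  - intros x Hax Hxb; apply (continuous_opp h); auto.
  - apply (filter_imp (fun x => 0 < h x)); [intros; lra | exact Hleft].
  - apply (filter_imp (fun x => 0 < h x)); [intros; lra | exact Hright].
  - intros x Hax Hxb Hx; apply Huniq; auto; lra.
  - lra.
  - apply (ex_derive_opp h), Hd. }
rewrite Derive_opp in Hopp; lra.
Qed.

Lemma exists_root_between (h : R -> R) (a b : Rbar) (y : R) :
  Rbar_lt a y -> Rbar_lt y b ->
  (forall x : R, Rbar_lt a x -> Rbar_lt x b -> continuous h x) ->
  (Rbar_at_right a (fun x => h x < 0) /\ Rbar_at_left b (fun x => 0 < h x)) \/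
  (Rbar_at_right a (fun x => 0 < h x) /\ Rbar_at_left b (fun x => h x < 0)) ->
  exists z : R, Rbar_lt a z /\ Rbar_lt z b /\ h z = 0.
Proof.
intros Hay Hyb Hcont Hends.
assert (Hsign : exists z1 z2 : R, Rbar_lt a z1 /\ z1 < z2 /\ Rbar_lt z2 b /\
                  (h z1 < 0 < h z2 \/ h z2 < 0 < h z1)).
{ destruct Hends as [[Hleft Hright] | [Hleft Hright]];
    destruct (Rbar_at_right_ex a y _ Hay Hleft) as [z1 [Haz1 [Hz1y Hhz1]]];
    destruct (Rbar_at_left_ex b y _ Hyb Hright) as [z2 [Hyz2 [Hz2b Hhz2]]];
    exists z1, z2; repeat split; auto; try lra; first [left; lra | right; lra]. }
destruct Hsign as (z1 & z2 & Haz1 & Hz12 & Hz2b & Hsign).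
pose proof (Rbar_lt_between a b z1 z2 Haz1 Hz2b) as Hin.
destruct (IVT_strict h z1 z2) as [z [Hz Hhz]]; auto.
- intros x Hx; apply Hcont; apply Hin; lra.
- exists z; repeat split; try apply Hin; auto; lra.
Qed.

Lemma eventually_sub_neg (F : (R -> Prop) -> Prop) {FF : Filter F} (f g : R -> R) (m : R) :
  F (fun x => f x < m) -> F (fun x => m < g x) -> F (fun x => f x - g x < 0).
Proof.
intros Hf Hg. apply (filter_imp (fun x => f x < m /\ m < g x)).
- intros x [H1 H2]; lra.
- now apply filter_and.
Qed.

Lemma eventually_sub_pos (F : (R -> Prop) -> Prop) {FF : Filter F} (f g : R -> R) (m : R) :
  F (fun x => m < f x) -> F (fun x => g x < m) -> F (fun x => 0 < f x - g x).
Proof.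
intros Hf Hg. apply (filter_imp (fun x => m < f x /\ g x < m)).
- intros x [H1 H2]; lra.
- now apply filter_and.
Qed.

Lemma is_lim_eventually_neg (f : R -> R) (x : Rbar) (l : R) :
  is_lim f x l -> l < 0 -> Rbar_locally' x (fun y => f y < 0).
Proof. intros Hf Hl. exact (Hf _ (open_lt 0 l Hl)). Qed.

Lemma is_lim_eventually_pos (f : R -> R) (x : Rbar) (l : R) :
  is_lim f x l -> 0 < l -> Rbar_locally' x (fun y => 0 < f y).
Proof. intros Hf Hl. exact (Hf _ (open_gt 0 l Hl)). Qed.

Lemma continuous_eventually_gt (g : R -> R) (x m : R) :
  continuous g x -> m < g x -> locally x (fun y => m < g y).
Proof. intros Hg Hm. exact (Hg _ (open_gt m (g x) Hm)). Qed.

Lemma continuous_eventually_lt (g : R -> R) (x m : R) :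
  continuous g x -> g x < m -> locally x (fun y => g y < m).
Proof. intros Hg Hm. exact (Hg _ (open_lt m (g x) Hm)). Qed.

Section StronglyHyperbolic.
Variable f : R -> R.
Hypothesis Hf : strongly_hyperbolic f.

Lemma sh_pos (x : R) : 0 < x -> 0 < f x.
Proof. apply Hf. Qed.

Lemma sh_ex_derive (x : R) : 0 < x -> ex_derive f x.
Proof. apply Hf. Qed.

Lemma sh_continuous (x : R) : 0 < x -> continuous f x.
Proof.
intros Hx. apply (ex_derive_continuous (K := R_AbsRing) (V := R_NormedModule)).
now apply sh_ex_derive.
Qed.

Lemma sh_large_near_0 (M : R) : exists e, 0 < e /\ forall s, 0 < s < e -> M < f s.
Proof.
destruct Hf as (_ & H0 & _).
destruct (H0 (fun y => M < y) (ex_intro _ M (fun _ H => H))) as [e He].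
exists e; split; [apply cond_pos|].
intros s Hs; apply He; [change (Rabs (s - 0) < e); apply Rabs_def1|]; lra.
Qed.

Lemma sh_small_at_infty (e : R) : 0 < e -> exists N, forall t, N < t -> f t < e.
Proof.
intros He. destruct Hf as (_ & _ & Hinf & _).
destruct (proj2 (is_lim_spec f p_infty 0) Hinf (mkposreal e He)) as [N HN].
exists N; intros t Ht. specialize (HN t Ht); simpl in HN.
apply Rabs_lt_between in HN; lra.
Qed.

Lemma sh_ratio_gt (d r : R) : r < 1 -> exists N, forall t, N < t -> r * f t < f (t + d).
Proof.
intros Hr. destruct Hf as (Hpos & _ & _ & _ & Hratio & _).
destruct (proj2 (is_lim_spec _ p_infty 1) (Hratio d) (mkposreal (1 - r) ltac:(lra)))
  as [N HN].
exists (Rmax N 0); intros t Ht.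
pose proof (Rmax_l N 0); pose proof (Rmax_r N 0).
assert (Hft := Hpos t ltac:(lra)).
specialize (HN t ltac:(lra)); simpl in HN. apply Rabs_lt_between in HN.
assert (Hq : r < f (t + d) / f t) by lra.
apply (Rmult_lt_compat_r (f t)) in Hq; [|exact Hft].
unfold Rdiv in Hq; rewrite Rmult_assoc, Rinv_l in Hq; lra.
Qed.

Lemma sh_surjective (v : R) : 0 < v -> exists t, 0 < t /\ f t = v.
Proof.
intros Hv.
destruct (sh_large_near_0 v) as [e [He Hlarge]].
destruct (sh_small_at_infty v Hv) as [N Hsmall].
set (t1 := Rmax N e + 1).
pose proof (Rmax_l N e); pose proof (Rmax_r N e).
destruct (IVT_strict (fun x => f x - v) (e / 2) t1) as [t [Ht Hft]].
- unfold t1; lra.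
- intros x Hx. apply (continuous_minus f (fun _ => v)).
  + apply sh_continuous; lra.
  + apply continuous_const.
- right. specialize (Hlarge (e / 2) ltac:(lra)). specialize (Hsmall t1 ltac:(unfold t1; lra)). lra.
- exists t; split; lra.
Qed.

End StronglyHyperbolic.

Section Fabc.
Variables (f1 f2 : R -> R) (a b c : R).
Local Notation F := (fabc f1 f2 a b c).

Lemma fabc_right (x : R) : - b < x -> F x = a * f1 (x + b) + c.
Proof. intros Hx; unfold fabc; destruct (Rlt_dec (- b) x); [reflexivity | lra]. Qed.

Lemma fabc_left (x : R) : x < - b -> F x = - a * f2 (- x - b) + c.
Proof. intros Hx; unfold fabc; destruct (Rlt_dec (- b) x); [lra | reflexivity]. Qed.

Lemma fabc_bar_graph (x y : R) : fabc_bar f1 f2 a b c (Some x, Some y) <-> x <> - b /\ y = F x.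
Proof.
split.
- intros [[z [Hz E]] | [E | E]]; try discriminate. now injection E as -> ->.
- intros [Hx ->]; left; now exists x.
Qed.

Lemma fabc_bar_pole (x : R) : fabc_bar f1 f2 a b c (Some x, None) -> x = - b.
Proof. now intros [[z [_ E]] | [E | E]]; try discriminate; injection E. Qed.

Lemma fabc_bar_asymptote (y : R) : fabc_bar f1 f2 a b c (None, Some y) -> y = c.
Proof. now intros [[z [_ E]] | [E | E]]; try discriminate; injection E. Qed.

Hypotheses (H1 : strongly_hyperbolic f1) (H2 : strongly_hyperbolic f2) (Ha : 0 < a).

Lemma ex_derive_fabc (x : R) : x <> - b -> ex_derive F x.
Proof.
intros Hx. destruct (Rtotal_order x (- b)) as [Hl | [E | Hr]]; [| contradiction |].
- apply (ex_derive_ext_loc (fun t => - a * f2 (- t - b) + c)).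
  + apply (filter_imp (fun t => t < - b)); [|exact (open_lt (- b) x Hl)].
    intros t Ht; now rewrite fabc_left.
  + auto_derive; repeat split. apply sh_ex_derive; [exact H2 | lra].
- apply (ex_derive_ext_loc (fun t => a * f1 (t + b) + c)).
  + apply (filter_imp (fun t => - b < t)); [|exact (open_gt (- b) x Hr)].
    intros t Ht; now rewrite fabc_right.
  + auto_derive; repeat split. apply sh_ex_derive; [exact H1 | lra].
Qed.

Lemma continuous_fabc (x : R) : x <> - b -> continuous F x.
Proof.
intros Hx. apply (ex_derive_continuous (K := R_AbsRing) (V := R_NormedModule)).
now apply ex_derive_fabc.
Qed.

Lemma fabc_lt_at_left_pole (M : R) : at_left (- b) (fun x => F x < M).
Proof.
destruct (sh_large_near_0 f2 H2 ((c - M) / a)) as [e [He Hlarge]].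
apply (locally_interval _ _ (- b - e) (- b + e)); simpl; try lra.
intros x Hx1 Hx2 Hx. rewrite fabc_left by exact Hx.
specialize (Hlarge (- x - b) ltac:(lra)).
apply (Rmult_lt_compat_l a) in Hlarge; [|exact Ha].
replace (a * ((c - M) / a)) with (c - M) in Hlarge by (field; lra). lra.
Qed.

Lemma fabc_gt_at_right_pole (M : R) : at_right (- b) (fun x => M < F x).
Proof.
destruct (sh_large_near_0 f1 H1 ((M - c) / a)) as [e [He Hlarge]].
apply (locally_interval _ _ (- b - e) (- b + e)); simpl; try lra.
intros x Hx1 Hx2 Hx. rewrite fabc_right by exact Hx.
specialize (Hlarge (x + b) ltac:(lra)).
apply (Rmult_lt_compat_l a) in Hlarge; [|exact Ha].
replace (a * ((M - c) / a)) with (M - c) in Hlarge by (field; lra). lra.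
Qed.

Lemma is_lim_fabc_p_infty : is_lim F p_infty c.
Proof.
apply is_lim_spec; intros eps.
destruct (sh_small_at_infty f1 H1 (eps / a)) as [N HN].
{ apply Rdiv_lt_0_compat; [apply cond_pos | exact Ha]. }
exists (Rmax (N - b) (- b)); intros x Hx.
pose proof (Rmax_l (N - b) (- b)); pose proof (Rmax_r (N - b) (- b)).
rewrite fabc_right by lra.
specialize (HN (x + b) ltac:(lra)).
assert (Hpos := sh_pos f1 H1 (x + b) ltac:(lra)).
apply (Rmult_lt_compat_l a) in HN; [|exact Ha].
replace (a * (eps / a)) with (pos eps) in HN by (field; lra).
rewrite Rabs_right; [lra|]. apply Rle_ge.
replace (a * f1 (x + b) + c - c) with (a * f1 (x + b)) by ring.
apply Rmult_le_pos; lra.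
Qed.

Lemma is_lim_fabc_m_infty : is_lim F m_infty c.
Proof.
apply is_lim_spec; intros eps.
destruct (sh_small_at_infty f2 H2 (eps / a)) as [N HN].
{ apply Rdiv_lt_0_compat; [apply cond_pos | exact Ha]. }
exists (Rmin (- N - b) (- b)); intros x Hx.
pose proof (Rmin_l (- N - b) (- b)); pose proof (Rmin_r (- N - b) (- b)).
rewrite fabc_left by lra.
specialize (HN (- x - b) ltac:(lra)).
assert (Hpos := sh_pos f2 H2 (- x - b) ltac:(lra)).
apply (Rmult_lt_compat_l a) in HN; [|exact Ha].
replace (a * (eps / a)) with (pos eps) in HN by (field; lra).
rewrite Rabs_left; [lra|].
replace (- a * f2 (- x - b) + c - c) with (- (a * f2 (- x - b))) by ring.
apply Ropp_lt_gt_0_contravar, Rmult_lt_0_compat; lra.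
Qed.

End Fabc.

Section TwoCurves.
Variables (f1 f2 : R -> R) (a1 a2 b1 b2 c1 c2 : R).
Hypotheses (H1 : strongly_hyperbolic f1) (H2 : strongly_hyperbolic f2)
  (Ha1 : 0 < a1) (Ha2 : 0 < a2).
Local Notation F1 := (fabc f1 f2 a1 b1 c1).
Local Notation F2 := (fabc f1 f2 a2 b2 c2).
Local Notation h := (fun x => F1 x - F2 x).

Lemma continuous_sub_fabc (x : R) : x <> - b1 -> x <> - b2 -> continuous h x.
Proof. intros N1 N2. apply (continuous_minus F1 F2); now apply continuous_fabc. Qed.

Lemma Derive_sub_fabc (x : R) : x <> - b1 -> x <> - b2 ->
  ex_derive h x /\ Derive h x = Derive F1 x - Derive F2 x.
Proof.
intros N1 N2.
assert (Hd1 := ex_derive_fabc f1 f2 a1 b1 c1 H1 H2 x N1).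
assert (Hd2 := ex_derive_fabc f1 f2 a2 b2 c2 H1 H2 x N2).
split; [now apply (ex_derive_minus F1 F2) | now apply Derive_minus].
Qed.

Lemma is_lim_sub_fabc_p_infty : is_lim h p_infty (c1 - c2).
Proof.
apply (is_lim_minus F1 F2 p_infty c1 c2); [apply is_lim_fabc_p_infty; auto .. | reflexivity].
Qed.

Lemma is_lim_sub_fabc_m_infty : is_lim h m_infty (c1 - c2).
Proof.
apply (is_lim_minus F1 F2 m_infty c1 c2); [apply is_lim_fabc_m_infty; auto .. | reflexivity].
Qed.

Lemma fabc_meet_same_pole : b1 = b2 -> a1 <> a2 -> c1 <> c2 ->
  exists x, x <> - b1 /\ F1 x = F2 x.
Proof.
intros <- Ha Hc.
(* On the right branch F1 = F2 reads f1 (x + b1) = v, on the left f2 (- x - b1) = - v. *)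
set (v := (c2 - c1) / (a1 - a2)).
assert (Hv : (a1 - a2) * v = c2 - c1) by (unfold v; field; lra).
destruct (Rtotal_order v 0) as [Hneg | [Hz | Hpos]].
- destruct (sh_surjective f2 H2 (- v) ltac:(lra)) as [t [Ht Hft]].
  exists (- t - b1); split; [lra|].
  rewrite !fabc_left by lra. replace (- (- t - b1) - b1) with t by ring.
  rewrite Hft; lra.
- exfalso; rewrite Hz in Hv; lra.
- destruct (sh_surjective f1 H1 v Hpos) as [t [Ht Hft]].
  exists (t - b1); split; [lra|].
  rewrite !fabc_right by lra. replace (t - b1 + b1) with t by ring.
  rewrite Hft; lra.
Qed.

Lemma sub_fabc_pos_at_p_infty : c1 = c2 -> a2 < a1 ->
  Rbar_locally p_infty (fun x => 0 < h x).
Proof.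
intros <- Ha.
destruct (sh_ratio_gt f1 H1 (b1 - b2) (a2 / a1)) as [N HN].
{ apply (Rmult_lt_reg_l a1); [exact Ha1|]. field_simplify; lra. }
exists (Rmax (N - b2) (Rmax (- b1) (- b2))); intros x Hx.
pose proof (Rmax_l (N - b2) (Rmax (- b1) (- b2))).
pose proof (Rmax_r (N - b2) (Rmax (- b1) (- b2))).
pose proof (Rmax_l (- b1) (- b2)); pose proof (Rmax_r (- b1) (- b2)).
rewrite !fabc_right by lra.
specialize (HN (x + b2) ltac:(lra)).
replace (x + b2 + (b1 - b2)) with (x + b1) in HN by ring.
apply (Rmult_lt_compat_l a1) in HN; [|exact Ha1].
replace (a1 * (a2 / a1 * f1 (x + b2))) with (a2 * f1 (x + b2)) in HN by (field; lra).
lra.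
Qed.

Lemma sub_fabc_pos_at_m_infty : c1 = c2 -> a1 < a2 ->
  Rbar_locally m_infty (fun x => 0 < h x).
Proof.
intros <- Ha.
destruct (sh_ratio_gt f2 H2 (b1 - b2) (a1 / a2)) as [N HN].
{ apply (Rmult_lt_reg_l a2); [exact Ha2|]. field_simplify; lra. }
exists (Rmin (- N - b1) (Rmin (- b1) (- b2))); intros x Hx.
pose proof (Rmin_l (- N - b1) (Rmin (- b1) (- b2))).
pose proof (Rmin_r (- N - b1) (Rmin (- b1) (- b2))).
pose proof (Rmin_l (- b1) (- b2)); pose proof (Rmin_r (- b1) (- b2)).
rewrite !fabc_left by lra.
specialize (HN (- x - b1) ltac:(lra)).
replace (- x - b1 + (b1 - b2)) with (- x - b2) in HN by ring.
apply (Rmult_lt_compat_l a2) in HN; [|exact Ha2].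
replace (a2 * (a1 / a2 * f2 (- x - b1))) with (a1 * f2 (- x - b1)) in HN by (field; lra).
lra.
Qed.

Hypothesis Hb : - b1 < - b2.

Lemma sub_fabc_neg_at_left_pole1 : Rbar_at_left (- b1) (fun x => h x < 0).
Proof.
apply (eventually_sub_neg _ _ _ (F2 (- b1) - 1)).
- now apply fabc_lt_at_left_pole.
- apply filter_le_within, continuous_eventually_gt; [|lra].
  apply continuous_fabc; auto; lra.
Qed.

Lemma sub_fabc_pos_at_right_pole1 : Rbar_at_right (- b1) (fun x => 0 < h x).
Proof.
apply (eventually_sub_pos _ _ _ (F2 (- b1) + 1)).
- now apply fabc_gt_at_right_pole.
- apply filter_le_within, continuous_eventually_lt; [|lra].
  apply continuous_fabc; auto; lra.
Qed.

Lemma sub_fabc_pos_at_left_pole2 : Rbar_at_left (- b2) (fun x => 0 < h x).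
Proof.
apply (eventually_sub_pos _ _ _ (F1 (- b2) - 1)).
- apply filter_le_within, continuous_eventually_gt; [|lra].
  apply continuous_fabc; auto; lra.
- now apply fabc_lt_at_left_pole.
Qed.

Lemma sub_fabc_neg_at_right_pole2 : Rbar_at_right (- b2) (fun x => h x < 0).
Proof.
apply (eventually_sub_neg _ _ _ (F1 (- b2) + 1)).
- apply filter_le_within, continuous_eventually_lt; [|lra].
  apply continuous_fabc; auto; lra.
- now apply fabc_gt_at_right_pole.
Qed.

Lemma fabc_meet_same_asymptote_lt : c1 = c2 -> a1 <> a2 ->
  exists x, x <> - b1 /\ x <> - b2 /\ F1 x = F2 x.
Proof.
intros Hc Ha.
destruct (Rtotal_order a1 a2) as [Hlt | [E | Hgt]]; [| contradiction |].
- destruct (exists_root_between h m_infty (- b1) (- b1 - 1)) as [x [_ [Hx E]]];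
    try exact I; try (simpl; lra).
  + intros x _ Hx; simpl in Hx; apply continuous_sub_fabc; lra.
  + right; split; [apply filter_le_within, sub_fabc_pos_at_m_infty |
                   apply sub_fabc_neg_at_left_pole1]; auto.
  + simpl in Hx; exists x; repeat split; lra.
- destruct (exists_root_between h (- b2) p_infty (- b2 + 1)) as [x [Hx [_ E]]];
    try exact I; try (simpl; lra).
  + intros x Hx _; simpl in Hx; apply continuous_sub_fabc; lra.
  + left; split; [apply sub_fabc_neg_at_right_pole2 |
                  apply filter_le_within, sub_fabc_pos_at_p_infty]; auto.
  + simpl in Hx; exists x; repeat split; lra.
Qed.

Lemma fabc_meet_twice_lt : c2 < c1 ->
  exists x y, x < - b1 /\ - b2 < y /\ F1 x = F2 x /\ F1 y = F2 y.
Proof.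
intros Hc.
destruct (exists_root_between h m_infty (- b1) (- b1 - 1)) as [x [_ [Hx Ex]]];
  try exact I; try (simpl; lra).
{ intros x _ Hx; simpl in Hx; apply continuous_sub_fabc; lra. }
{ right; split; [apply filter_le_within | apply sub_fabc_neg_at_left_pole1].
  apply (is_lim_eventually_pos _ _ _ is_lim_sub_fabc_m_infty); lra. }
destruct (exists_root_between h (- b2) p_infty (- b2 + 1)) as [y [Hy [_ Ey]]];
  try exact I; try (simpl; lra).
{ intros y Hy _; simpl in Hy; apply continuous_sub_fabc; lra. }
{ left; split; [apply sub_fabc_neg_at_right_pole2 | apply filter_le_within].
  apply (is_lim_eventually_pos _ _ _ is_lim_sub_fabc_p_infty); lra. }
simpl in Hx, Hy; exists x, y; repeat split; lra.
Qed.

Lemma asymptote_lt_of_unique_meet (xp : R) : c1 <> c2 ->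
  (forall x, x <> - b1 -> x <> - b2 -> F1 x = F2 x -> x = xp) -> c1 < c2.
Proof.
intros Hc Huniq.
destruct (Rtotal_order c1 c2) as [Hlt | [E | Hgt]]; [exact Hlt | contradiction | exfalso].
destruct (fabc_meet_twice_lt Hgt) as [x [y [Hx [Hy [Ex Ey]]]]].
assert (x = xp) by (apply Huniq; auto; lra).
assert (y = xp) by (apply Huniq; auto; lra).
lra.
Qed.

Lemma Derive_fabc_eq_at_unique_meet_lt (xp : R) :
  c1 <> c2 -> xp <> - b1 -> xp <> - b2 -> F1 xp = F2 xp ->
  (forall x, x <> - b1 -> x <> - b2 -> F1 x = F2 x -> x = xp) ->
  Derive F1 xp = Derive F2 xp.
Proof.
intros Hc N1 N2 Hxp Huniq.
assert (Hlt := asymptote_lt_of_unique_meet xp Hc Huniq).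
destruct (Derive_sub_fabc xp N1 N2) as [Hd HD].
enough (Derive h xp = 0) by lra.
assert (Hcont : forall x, x <> - b1 -> x <> - b2 -> continuous h x)
  by exact continuous_sub_fabc.
assert (Hroot : forall x, x <> - b1 -> x <> - b2 -> h x = 0 -> x = xp)
  by (intros x N1' N2' Hx; apply Huniq; auto; lra).
destruct (Rtotal_order xp (- b1)) as [HI | [E | HJK]]; [| contradiction |].
- apply (Derive_eq_0_at_unique_root h m_infty (- b1));
    try exact I; try (simpl; lra); try exact Hd.
  + intros x _ Hx; apply Hcont; simpl in Hx; lra.
  + apply filter_le_within, (is_lim_eventually_neg _ _ _ is_lim_sub_fabc_m_infty); lra.
  + apply sub_fabc_neg_at_left_pole1.
  + intros x _ Hx; apply Hroot; simpl in Hx; lra.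
- destruct (Rtotal_order xp (- b2)) as [HJ | [E | HK]]; [| contradiction |].
  + apply (Derive_eq_0_at_unique_root_pos h (- b1) (- b2));
      try exact I; try (simpl; lra); try exact Hd.
    * intros x Hx1 Hx2; apply Hcont; simpl in Hx1, Hx2; lra.
    * apply sub_fabc_pos_at_right_pole1.
    * apply sub_fabc_pos_at_left_pole2.
    * intros x Hx1 Hx2; apply Hroot; simpl in Hx1, Hx2; lra.
  + apply (Derive_eq_0_at_unique_root h (- b2) p_infty);
      try exact I; try (simpl; lra); try exact Hd.
    * intros x Hx _; apply Hcont; simpl in Hx; lra.
    * apply sub_fabc_neg_at_right_pole2.
    * apply filter_le_within, (is_lim_eventually_neg _ _ _ is_lim_sub_fabc_p_infty); lra.
    * intros x Hx _; apply Hroot; simpl in Hx; lra.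
Qed.

End TwoCurves.

Lemma fabc_meet_same_asymptote (f1 f2 : R -> R) (a1 a2 b1 b2 c : R) :
  strongly_hyperbolic f1 -> strongly_hyperbolic f2 -> 0 < a1 -> 0 < a2 ->
  b1 <> b2 -> a1 <> a2 ->
  exists x, x <> - b1 /\ x <> - b2 /\ fabc f1 f2 a1 b1 c x = fabc f1 f2 a2 b2 c x.
Proof.
intros H1 H2 Ha1 Ha2 Hb Ha.
destruct (Rtotal_order (- b1) (- b2)) as [Hlt | [E | Hgt]]; [| lra |].
- now apply fabc_meet_same_asymptote_lt.
- destruct (fabc_meet_same_asymptote_lt f1 f2 a2 a1 b2 b1 c c) as [x (N2 & N1 & E)]; auto.
  exists x; auto.
Qed.

Lemma Derive_fabc_eq_at_unique_meet (f1 f2 : R -> R) (a1 a2 b1 b2 c1 c2 xp : R) :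
  strongly_hyperbolic f1 -> strongly_hyperbolic f2 -> 0 < a1 -> 0 < a2 ->
  b1 <> b2 -> c1 <> c2 -> xp <> - b1 -> xp <> - b2 ->
  fabc f1 f2 a1 b1 c1 xp = fabc f1 f2 a2 b2 c2 xp ->
  (forall x, x <> - b1 -> x <> - b2 ->
     fabc f1 f2 a1 b1 c1 x = fabc f1 f2 a2 b2 c2 x -> x = xp) ->
  Derive (fabc f1 f2 a1 b1 c1) xp = Derive (fabc f1 f2 a2 b2 c2) xp.
Proof.
intros H1 H2 Ha1 Ha2 Hb Hc N1 N2 Hxp Huniq.
destruct (Rtotal_order (- b1) (- b2)) as [Hlt | [E | Hgt]]; [| lra |].
- now apply Derive_fabc_eq_at_unique_meet_lt.
- symmetry; apply Derive_fabc_eq_at_unique_meet_lt; auto.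
Qed.

Theorem lemma4p15 (f1 f2 : R -> R) (a1 a2 b1 b2 c1 c2 : R) (p : P) :
  strongly_hyperbolic f1 -> strongly_hyperbolic f2 ->
  0 < a1 -> 0 < a2 ->
  ~ (forall q : P, fabc_bar f1 f2 a1 b1 c1 q <-> fabc_bar f1 f2 a2 b2 c2 q) ->
  (forall q : P, (fabc_bar f1 f2 a1 b1 c1 q /\ fabc_bar f1 f2 a2 b2 c2 q) <-> q = p) ->
  (forall b : R, p = (Some b, None) ->
     a1 = a2 /\ b1 = - b /\ b2 = - b /\ c1 <> c2) /\
  (forall c : R, p = (None, Some c) ->
     a1 = a2 /\ b1 <> b2 /\ c1 = c /\ c2 = c) /\
  (forall xp yp : R, p = (Some xp, Some yp) ->
     Derive (fabc f1 f2 a1 b1 c1) xp = Derive (fabc f1 f2 a2 b2 c2) xp).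
Proof.
intros H1 H2 Ha1 Ha2 _ Hmeet.
destruct (proj2 (Hmeet p) eq_refl) as [Hp1 Hp2].
assert (Hcommon : forall q, fabc_bar f1 f2 a1 b1 c1 q -> fabc_bar f1 f2 a2 b2 c2 q -> p = q)
  by (intros q Hq1 Hq2; symmetry; now apply Hmeet).
assert (Hc : c1 <> c2 \/ p = (None, Some c1)).
{ destruct (Req_dec c1 c2) as [<- | Hc]; [right; apply Hcommon; now right; right | now left]. }
assert (Hb : b1 <> b2 \/ p = (Some (- b1), None)).
{ destruct (Req_dec b1 b2) as [<- | Hb]; [right; apply Hcommon; now right; left | now left]. }
assert (Hgraph : forall x, x <> - b1 -> x <> - b2 ->
          fabc f1 f2 a1 b1 c1 x = fabc f1 f2 a2 b2 c2 x ->
          p = (Some x, Some (fabc f1 f2 a1 b1 c1 x)))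
  by (intros x N1 N2 E; apply Hcommon; apply fabc_bar_graph; auto).
split; [| split].
- intros b ->.
  apply fabc_bar_pole in Hp1, Hp2.
  destruct Hc as [Hc | Hc]; [| discriminate].
  destruct (Req_dec a1 a2) as [Ha | Ha]; [repeat split; auto; lra | exfalso].
  destruct (fabc_meet_same_pole f1 f2 a1 a2 b1 b2 c1 c2) as [x [N E]]; auto; [lra |].
  discriminate (Hgraph x N ltac:(lra) E).
- intros c ->.
  apply fabc_bar_asymptote in Hp1, Hp2; subst c1 c2.
  destruct Hb as [Hb | Hb]; [| discriminate].
  destruct (Req_dec a1 a2) as [Ha | Ha]; [repeat split; auto | exfalso].
  destruct (fabc_meet_same_asymptote f1 f2 a1 a2 b1 b2 c) as [x (N1 & N2 & E)]; auto.
  discriminate (Hgraph x N1 N2 E).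
- intros xp yp ->.
  apply fabc_bar_graph in Hp1 as [N1 Y1], Hp2 as [N2 Y2].
  destruct Hc as [Hc | Hc]; [| discriminate].
  destruct Hb as [Hb | Hb]; [| discriminate].
  apply Derive_fabc_eq_at_unique_meet; auto; [congruence |].
  intros x N1' N2' E. now injection (Hgraph x N1' N2' E).
Qed.
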